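(* The useless arc rule is correct: if $\mathcal N_2$ is obtained from a negotiation $\mathcal N_1$ by one application of the useless arc rule, then $\mathcal N_1\equiv\mathcal N_2$.
   Context: Fix a finite nonempty set $A$ of agents; each $a\in A$ has a nonempty set $Q_a$ of internal states, $Q_A=\prod_{a\in A}Q_a$. A transformer is a left-total relation $\tau\subseteq Q_A\times Q_A$; for $S\subseteq A$ an $S$-transformer is a transformer with $(q,q')\in\tau\Rightarrow q_a=q'_a$ for all $a\notin S$. An atom is $n=(P_n,R_n,\delta_n)$: $P_n\subseteq A$ nonempty (parties), $R_n$ finite nonempty (outcomes), $\delta_n$ assigns to each $r\in R_n$ a $P_n$-transformer, written $\langle n,r\rangle$. A negotiation is $\mathcal N=(N,n_0,n_f,\mathcal X)$ with $N$ a finite set of atoms, $n_0,n_f\in N$ (possibly equal), $T(N)=\{(n,a,r): n\in N,a\in P_n,r\in R_n\}$, $\mathcal X:T(N)\to 2^N$, such that every agent is a party of $n_0$ and of $n_f$, and $\mathcal X(n,a,r)=\emptyset$ iff $n=n_f$. A marking is $x:A\to 2^N$; initial $x_0(a)=\{n_0\}$, final $x_f(a)=\emptyset$. $x$ enables $n$ if $n\in x(a)$ for all $a\in P_n$; then for $r\in R_n$ the step $(n,r)$ leads to $x'$ with $x'(a)=\mathcal X(n,a,r)$ for $a\in P_n$ and $x'(a)=x(a)$ otherwise. A large step is a finite occurrence sequence from $x_0$ to $x_f$. $\mathcal N$ is sound if every atom is enabled at some reachable marking and every occurrence sequence from $x_0$ is a large step or can be extended to one. For $r\in R_{n_f}$,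 the summary transformer is $\langle\mathcal N,r\rangle=\bigcup_\sigma \langle n_1,r_1\rangle\cdots\langle n_k,r_k\rangle$, the union over all large steps $\sigma=(n_1,r_1)\cdots(n_k,r_k)$ ending with $(n_f,r)$, with juxtaposition being relational composition. Two negotiations over the same agents are equivalent, $\mathcal N_1\equiv\mathcal N_2$, if either both are unsound, or both are sound, have the same set of final outcomes $R_{n_f}$, and $\langle\mathcal N_1,r\rangle=\langle\mathcal N_2,r\rangle$ for every final outcome $r$. Useless arc rule. Guard: there are $(n,a,r),(n,b,r)\in T(N)$ and two distinct atoms $n',n''\in N$ such that $a,b\in P_{n'}\cap P_{n''}$, $n',n''\in\mathcal X(n,a,r)$ and $\mathcal X(n,b,r)=\{n'\}$. Action: replace $\mathcal X(n,a,r)$ by $\mathcal X(n,a,r)\setminus\{n''\}$ (everything else unchanged). *)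

From mathcomp Require Import all_boot.
Set Implicit Arguments. Unset Strict Implicit. Unset Printing Implicit Defensive.

Section Negotiations.
Variables (Ag : finType) (Q : Ag -> Type) (Out : finType).

Definition gstate := forall a : Ag, Q a.
Definition transformer := gstate -> gstate -> Prop.

Definition left_total (t : transformer) := forall q, exists q', t q q'.
Definition S_transformer (S : {set Ag}) (t : transformer) :=
  left_total t /\ forall q q', t q q' -> forall a, a \notin S -> q a = q' a.

Definition rcomp (t1 t2 : transformer) : transformer :=
  fun q q'' => exists q', t1 q q' /\ t2 q' q''.
Definition rid : transformer := fun q q' => q = q'.

(* Atoms are named by the elements of a finite type [Atom]: the atom named n is
   (parties n, outcomes n, delta n).  Outcomes live in a common finite universe Out. *)
Record negotiation (Atom : finType) := Negotiation {
  parties  : Atom -> {set Ag};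
  outcomes : Atom -> {set Out};
  delta    : Atom -> Out -> transformer;
  trans    : Atom -> Ag -> Out -> {set Atom};
  n_init   : Atom;
  n_fin    : Atom }.

Section OneNeg.
Variables (Atom : finType) (N : negotiation Atom).

Definition wf_negotiation : Prop :=
  [/\ (forall n, parties N n != set0),
      (forall n, outcomes N n != set0),
      (forall n r, r \in outcomes N n -> S_transformer (parties N n) (delta N n r)),
      (forall a, a \in parties N (n_init N) /\ a \in parties N (n_fin N)) &
      (forall n a r, a \in parties N n -> r \in outcomes N n ->
          (trans N n a r = set0 <-> n = n_fin N))].

Definition marking := {ffun Ag -> {set Atom}}.
Definition x_init : marking := [ffun _ => [set n_init N]].
Definition x_fin : marking := [ffun _ => set0].

Definition enabled (x : marking) (n : Atom) : Prop :=
  forall a, a \in parties N n -> n \in x a.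

Definition step (x : marking) (n : Atom) (r : Out) (x' : marking) : Prop :=
  [/\ enabled x n, r \in outcomes N n &
      x' = [ffun a => if a \in parties N n then trans N n a r else x a]].

Fixpoint occ (x : marking) (s : seq (Atom * Out)) (x' : marking) : Prop :=
  match s with
  | [::] => x = x'
  | (n, r) :: s' => exists x1, step x n r x1 /\ occ x1 s' x'
  end.

Definition occurrence_sequence (s : seq (Atom * Out)) := exists x, occ x_init s x.
Definition large_step (s : seq (Atom * Out)) := occ x_init s x_fin.

Definition sound : Prop :=
  (forall n, exists s x, occ x_init s x /\ enabled x n) /\
  (forall s, occurrence_sequence s -> exists s', large_step (s ++ s')).

Fixpoint seq_transformer (s : seq (Atom * Out)) : transformer :=
  match s with
  | [::] => rid
  | (n, r) :: s' => rcomp (delta N n r) (seq_transformer s')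
  end.

Definition summary (r : Out) : transformer :=
  fun q q' => exists s, large_step s /\ (exists s0, s = rcons s0 (n_fin N, r)) /\
                        seq_transformer s q q'.
End OneNeg.

Definition equiv_neg (A1 A2 : finType) (N1 : negotiation A1) (N2 : negotiation A2) : Prop :=
  (~ sound N1 /\ ~ sound N2) \/
  [/\ sound N1, sound N2,
      outcomes N1 (n_fin N1) = outcomes N2 (n_fin N2) &
      forall r, r \in outcomes N1 (n_fin N1) ->
        forall q q', summary N1 r q q' <-> summary N2 r q q'].

Definition useless_arc_rule (Atom : finType) (N1 N2 : negotiation Atom) : Prop :=
  exists (n : Atom) (a b : Ag) (r : Out) (n' n'' : Atom),
    [/\ [/\ a \in parties N1 n, b \in parties N1 n, r \in outcomes N1 n & n' != n''],
        [/\ a \in parties N1 n', b \in parties N1 n', a \in parties N1 n'' & b \in parties N1 n''],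
        [/\ n' \in trans N1 n a r, n'' \in trans N1 n a r & trans N1 n b r = [set n']] &
        N2 = Negotiation (parties N1) (outcomes N1) (delta N1)
               (fun m c s => if (m == n) && (c == a) && (s == r)
                             then trans N1 n a r :\ n'' else trans N1 m c s)
               (n_init N1) (n_fin N1)].

End Negotiations.

(* After the
   outcome r of n, agent b holds only n', so n'' (a party of which is b) cannot
   occur before b leaves n'; and as a is a party of n', the stray token n'' of a
   is erased when n' occurs.  Hence the markings of the two negotiations agree
   up to that stray token, which yields a bisimulation preserving enabledness,
   steps and the final marking.  Since atoms and transformers are unchanged,
   both negotiations have the same large steps and the same summaries. *)

From Stdlib Require Import Classical.
From mathcomp Require Import all_boot.

Set Implicit Arguments. Unset Strict Implicit. Unset Printing Implicit Defensive.

Section Bisimulation.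
Variables (Ag : finType) (Q : Ag -> Type) (Out Atom : finType).
Local Notation marking := (marking Ag Atom).
Local Notation negotiation := (negotiation Q Out Atom).
Local Notation x_fin := (x_fin Ag Atom).

Definition simulation (N1 N2 : negotiation) (R : marking -> marking -> Prop) :=
  [/\ forall x1 x2 m, R x1 x2 -> enabled N1 x1 m -> enabled N2 x2 m,
      forall x1 x2 m s y1, R x1 x2 -> step N1 x1 m s y1 ->
        exists2 y2, step N2 x2 m s y2 & R y1 y2 &
      forall x1 x2, R x1 x2 -> x1 = x_fin -> x2 = x_fin].

Definition bisimulation (N1 N2 : negotiation) (R : marking -> marking -> Prop) :=
  [/\ R (x_init N1) (x_init N2), simulation N1 N2 R &
      simulation N2 N1 (fun x2 x1 => R x1 x2)].

Lemma bisimulation_sym N1 N2 R :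
  bisimulation N1 N2 R -> bisimulation N2 N1 (fun x2 x1 => R x1 x2).
Proof. by case. Qed.

Section Simulation.
Variables (N1 N2 : negotiation) (R : marking -> marking -> Prop).
Hypothesis simR : simulation N1 N2 R.

Lemma occ_simulation t x1 x2 y1 :
  R x1 x2 -> occ N1 x1 t y1 -> exists2 y2, occ N2 x2 t y2 & R y1 y2.
Proof.
case: simR => _ sim_step _.
elim: t x1 x2 => [|[m s] t IHt] x1 x2 /= Rx; first by move=> <-; exists x2.
case=> z1 [step1 occ1]; have [z2 step2 Rz] := sim_step _ _ _ _ _ Rx step1.
by have [y2 occ2 Ry] := IHt _ _ Rz occ1; exists y2 => //; exists z2.
Qed.

Lemma large_step_simulation t :
  R (x_init N1) (x_init N2) -> large_step N1 t -> large_step N2 t.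
Proof.
move=> Rinit /(occ_simulation Rinit) [y2 occ2 Ry]; case: simR => _ _ sim_fin.
by rewrite /large_step -(sim_fin _ _ Ry).
Qed.

End Simulation.

Lemma sound_bisimulation N1 N2 R : bisimulation N1 N2 R -> sound N1 -> sound N2.
Proof.
case=> Rinit sim12 sim21 [reach1 extend1]; split=> [m | t [x2 occ2]].
- have [t [x1 [occ1 en1]]] := reach1 m.
  have [x2 occ2 Rx] := occ_simulation sim12 Rinit occ1.
  by case: sim12 => sim_en _ _; exists t, x2; split; last exact: sim_en en1.
- have [x1 occ1 _] := occ_simulation sim21 Rinit occ2.
  have [t' ls1] := extend1 t (ex_intro _ x1 occ1).
  by exists t'; exact: (large_step_simulation sim12 Rinit ls1).
Qed.

Lemma seq_transformer_delta (N1 N2 : negotiation) :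
  delta N1 = delta N2 -> seq_transformer N1 = seq_transformer N2.
Proof. by move=> eq_delta; rewrite /seq_transformer eq_delta. Qed.

Lemma bisimulation_equiv N1 N2 R :
  bisimulation N1 N2 R -> outcomes N1 = outcomes N2 -> delta N1 = delta N2 ->
  n_fin N1 = n_fin N2 -> equiv_neg N1 N2.
Proof.
move=> bisim eq_out eq_delta eq_fin.
have [sound1 | unsound1] := classic (sound N1); last first.
  by left; split=> // /(sound_bisimulation (bisimulation_sym bisim)).
right; split=> //; first exact: sound_bisimulation bisim sound1.
  by rewrite eq_out eq_fin.
move=> r _ q q'; rewrite /summary eq_fin (seq_transformer_delta eq_delta).
have [Rinit sim12 sim21] := bisim.
by split=> -[t [ls rest]]; exists t; split=> //;
  [exact: (large_step_simulation sim12 Rinit ls) |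
   exact: (large_step_simulation sim21 Rinit ls)].
Qed.

End Bisimulation.

Section UselessArc.
Variables (Ag : finType) (Q : Ag -> Type) (Out Atom : finType).
Variables (N : negotiation Q Out Atom) (n : Atom) (a b : Ag) (r : Out) (n' n'' : Atom).
Local Notation marking := (marking Ag Atom).

Definition drop_arc : negotiation Q Out Atom :=
  Negotiation (parties N) (outcomes N) (delta N)
    (fun m c s => if (m == n) && (c == a) && (s == r)
                  then trans N n a r :\ n'' else trans N m c s)
    (n_init N) (n_fin N).

Definition fire (N0 : negotiation Q Out Atom) (x : marking) m s : marking :=
  [ffun c => if c \in parties N0 m then trans N0 m c s else x c].

Definition add_token (x : marking) : marking :=
  [ffun c => if c == a then n'' |: x a else x c].

Definition arc_related (x1 x2 : marking) : Prop :=
  x1 = x2 \/ x2 b = [set n'] /\ x1 = add_token x2.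

Hypotheses (a_n : a \in parties N n) (b_n : b \in parties N n).
Hypotheses (a_n' : a \in parties N n') (b_n'' : b \in parties N n'').
Hypotheses (neq_ab : a != b) (neq_n'n'' : n' != n'').
Hypotheses (n''_arc : n'' \in trans N n a r) (b_arc : trans N n b r = [set n']).

Lemma fire_drop_arc x m s : arc_related (fire N x m s) (fire drop_arc x m s).
Proof.
have [/andP[/eqP-> /eqP->] | neq_ms] := boolP ((m == n) && (s == r)); last first.
  left; apply/ffunP=> c; rewrite !ffunE /=.
  by case: (m == n) neq_ms; case: (s == r); rewrite ?andbF.
right; split; first by rewrite ffunE /= b_n eqxx eq_sym (negbTE neq_ab) andbF b_arc.
apply/ffunP=> c; rewrite !ffunE /=.
have [-> | neq_ca] := eqVneq c a; first by rewrite a_n !eqxx setD1K.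
by rewrite andbF.
Qed.

Lemma enabled_arc_related x1 x2 m :
  arc_related x1 x2 -> enabled N x1 m <-> enabled N x2 m.
Proof.
case=> [-> // | [x2_b ->]]; split=> en c c_m; last first.
  by rewrite ffunE; case: eqP => [<- | _]; rewrite ?in_setU1 en ?orbT.
move: (en c c_m); rewrite ffunE; have [-> | _ //] := eqVneq c a.
case/setU1P=> [m_n'' | //]; move: (en b); rewrite m_n'' => /(_ b_n'').
(* b holds only n', so n'' is not enabled even with the stray token *)
by rewrite ffunE eq_sym (negbTE neq_ab) x2_b in_set1 eq_sym (negbTE neq_n'n'').
Qed.

Lemma fire_arc_related x1 x2 m s : arc_related x1 x2 -> enabled N x2 m ->
  arc_related (fire N x1 m s) (fire drop_arc x2 m s).
Proof.
case=> [-> | [x2_b ->]] en2; first exact: fire_drop_arc.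
have [a_m | a_m] := boolP (a \in parties N m).
  suff -> : fire N (add_token x2) m s = fire N x2 m s by exact: fire_drop_arc.
  apply/ffunP=> c; rewrite !ffunE; case: ifP => // c_m.
  by case: eqP => // eq_ca; rewrite eq_ca a_m in c_m.
have b_m : b \notin parties N m.
  apply/negP=> b_m; move: (en2 b b_m); rewrite x2_b in_set1 => /eqP m_n'.
  by rewrite m_n' a_n' in a_m.
have n_m : m != n by apply: contraNneq a_m => ->.
right; split; first by rewrite ffunE /= (negbTE b_m).
apply/ffunP=> c; rewrite !ffunE /= (negbTE n_m) /=.
by have [-> | _] := eqVneq c a; rewrite ?(negbTE a_m).
Qed.

Lemma arc_related_fin x1 x2 :
  arc_related x1 x2 -> (x1 = x_fin Ag Atom <-> x2 = x_fin Ag Atom).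
Proof.
case=> [-> // | [x2_b ->]]; split=> [/ffunP/(_ a) | x2_fin].
  by rewrite !ffunE eqxx => /setP/(_ n''); rewrite in_setU1 eqxx in_set0.
by move: x2_b; rewrite x2_fin ffunE => /setP/(_ n'); rewrite in_set0 in_set1 eqxx.
Qed.

Lemma useless_arc_bisimulation : bisimulation N drop_arc arc_related.
Proof.
split; first by left.
- split=> [x1 x2 m R12 /(enabled_arc_related m R12) // | x1 x2 m s _ R12 [en1 r_m ->] |
           x1 x2 /arc_related_fin R12 /R12 //].
  have en2 := proj1 (enabled_arc_related m R12) en1.
  by exists (fire drop_arc x2 m s); [split | exact: fire_arc_related].
- split=> [x2 x1 m R12 /(enabled_arc_related m R12) // | x2 x1 m s _ R12 [en2 r_m ->] |
           x2 x1 /arc_related_fin R12 /R12 //].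
  have en1 := proj2 (enabled_arc_related m R12) en2.
  by exists (fire N x1 m s); [split | exact: fire_arc_related].
Qed.

End UselessArc.

Theorem theorem3 (Ag : finType) (Q : Ag -> Type) (Out Atom : finType)
    (N1 N2 : negotiation Q Out Atom) :
  (exists a : Ag, True) ->
  (forall a : Ag, inhabited (Q a)) ->
  wf_negotiation N1 ->
  useless_arc_rule N1 N2 ->
  equiv_neg N1 N2.
Proof.
move=> _ _ _ [n [a [b [r [n' [n'' [[a_n b_n _ neq_n'n''] [a_n' _ _ b_n'']
  [_ n''_arc b_arc] ->]]]]]]].
have neq_ab : a != b.
  apply: contra_neq neq_n'n'' => eq_ab.
  by move: n''_arc; rewrite eq_ab b_arc in_set1 eq_sym => /eqP.
exact: bisimulation_equiv (useless_arc_bisimulation a_n b_n a_n' b_n'' neq_ab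
  neq_n'n'' n''_arc b_arc) erefl erefl erefl.
Qed.
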